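(* For every process $s$, the set $\mathcal{L}(s)$ of trace distribution formulae satisfied by $s$ is a closed subset of the space of trace distribution formulae of $\mathcal{L}$ with respect to the topology induced by the metric $D$.
   Context: PTS $(\mathcal{S},A,\to)$ with finitely supported distributions; standing assumptions: processes are image-finite and finite. Computations $c=s_0\xrightarrow{a_1}\cdots\xrightarrow{a_n}s_n$ via transitions $s_{i-1}\xrightarrow{a_i}\pi_i$, $s_i\in\mathrm{supp}(\pi_i)$; $\Pr(c)=\prod\pi_i(s_i)$; $|c|=n$; maximal = not a proper prefix of another computation from the same process; $\mathcal{C}_{\max}(z)$. A resolution of $s$ is a PTS $\mathcal{Z}=(Z,A,\to_{\mathcal{Z}})$ with $\mathrm{corr}\colon Z\to\mathcal{S}$ and initial state $z_s$, $\mathrm{corr}(z_s)=s$, such that $z_s$ is in no target support, every other state is in the support of a target of a transition from a different state, every $z\xrightarrow{a}_{\mathcal{Z}}\pi$ is matched by $\mathrm{corr}(z)\xrightarrow{a}\pi'$ with $\pi(z')=\pi'(\mathrm{corr}(z'))$, and each state has at most one outgoing transition; $\mathrm{res}(s)$ the set of resolutions. Logic $\mathcal{L}$: trace formulae $\Phi::=\top\mid\langle a\rangle\Phi$, $\mathrm{depth}(\top)=0$, $\mathrm{depth}(\langle a\rangle\Phi)=1+\mathrm{depth}(\Phi)$; trace distribution formulae $\bigoplus_{i\in I}r_i\Phi_i$ ($I$ finite nonempty, $\Phi_i$ pairwise distinct, $r_i\in(0,1]$, $\sum r_i=1$), identified with probability distributions on trace formulae. $c\models\top$ always; $c\models\langle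 a\rangle\Phi$ iff $c=s\xrightarrow{a}c'$ with $c'\models\Phi$. $s\models\bigoplus_i r_i\Phi_i$ iff some $\mathcal{Z}\in\mathrm{res}(s)$ with initial state $z$ satisfies $\Pr(\{c\in\mathcal{C}_{\max}(z):c\models\Phi_i,|c|=\mathrm{depth}(\Phi_i)\})=r_i$ for all $i$. $\mathcal{L}(s)$ is the set of trace distribution formulae satisfied by $s$. Distance: $d(\Phi_1,\Phi_2)=0$ if $\Phi_1=\Phi_2$, else $1$; $D(\Psi_1,\Psi_2)=\min_\omega\sum\omega(\Phi,\Phi')d(\Phi,\Phi')$ over couplings $\omega$ of $\Psi_1,\Psi_2$ (Kantorovich lifting of $d$); $D$ is a metric on trace distribution formulae. *)

From Stdlib Require Import Reals List Classical ClassicalEpsilon.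
Import ListNotations.
Open Scope R_scope.

Set Implicit Arguments.

Fixpoint sum_list (l : list R) : R :=
  match l with [] => 0 | x :: l' => x + sum_list l' end.

Definition fsum (T : Type) (f : T -> R) (r : R) : Prop :=
  exists l : list T, NoDup l /\ (forall x, f x <> 0 -> In x l) /\
                     sum_list (map f l) = r.

Definition is_fdist (T : Type) (pi : T -> R) : Prop :=
  (forall x, 0 <= pi x) /\ fsum pi 1.

Definition ifP (P : Prop) (a b : R) : R :=
  if excluded_middle_informative P then a else b.

Definition pts_wf (S Act : Type) (trans : S -> Act -> (S -> R) -> Prop) : Prop :=
  forall s a pi, trans s a pi -> is_fdist pi.

Definition image_finite (S Act : Type) (trans : S -> Act -> (S -> R) -> Prop) : Prop :=
  forall s a, exists l : list (S -> R), forall pi, trans s a pi -> In pi l.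

Definition step (S Act : Type) (trans : S -> Act -> (S -> R) -> Prop) (t u : S) : Prop :=
  exists a pi, trans u a pi /\ 0 < pi t.

(* finite process: no infinite computation starts from s *)
Definition finite_process (S Act : Type) (trans : S -> Act -> (S -> R) -> Prop) (s : S) : Prop :=
  Acc (step trans) s.

(* A computation  z0 --a1--> z1 ... --an--> zn  via transitions z_{i-1} --a_i--> pi_i,
   z_i in supp(pi_i), is represented by its start state and the list of steps
   (a_i, pi_i, z_i). *)

Fixpoint is_comp (Z Act : Type) (transZ : Z -> Act -> (Z -> R) -> Prop)
         (z : Z) (c : list (Act * (Z -> R) * Z)) : Prop :=
  match c with
  | [] => True
  | (a, pi, z') :: c' => transZ z a pi /\ 0 < pi z' /\ is_comp transZ z' c'
  end.

Fixpoint comp_prob (Z Act : Type) (c : list (Act * (Z -> R) * Z)) : R :=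
  match c with
  | [] => 1
  | (a, pi, z') :: c' => pi z' * comp_prob c'
  end.

Definition is_max_comp (Z Act : Type) (transZ : Z -> Act -> (Z -> R) -> Prop)
           (z : Z) (c : list (Act * (Z -> R) * Z)) : Prop :=
  is_comp transZ z c /\
  ~ (exists ext, ext <> [] /\ is_comp transZ z (c ++ ext)).

Definition resolution (S Act : Type) (trans : S -> Act -> (S -> R) -> Prop) (s : S)
           (Z : Type) (transZ : Z -> Act -> (Z -> R) -> Prop) (corr : Z -> S) (zs : Z)
  : Prop :=
  pts_wf transZ /\
  corr zs = s /\
  (forall z a pi, transZ z a pi -> ~ (0 < pi zs)) /\
  (forall z, z <> zs -> exists z' a pi, z' <> z /\ transZ z' a pi /\ 0 < pi z) /\
  (forall z a pi, transZ z a pi ->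
     exists pi', trans (corr z) a pi' /\
       forall z', 0 < pi z' -> pi z' = pi' (corr z')) /\
  (forall z a1 pi1 a2 pi2, transZ z a1 pi1 -> transZ z a2 pi2 -> a1 = a2 /\ pi1 = pi2).

Inductive tform (Act : Type) : Type :=
| TTop : tform Act
| TDia : Act -> tform Act -> tform Act.
Arguments TTop {Act}.

Fixpoint depth (Act : Type) (f : tform Act) : nat :=
  match f with TTop => 0%nat | TDia _ f' => S (depth f') end.

Fixpoint comp_sat (Z Act : Type) (c : list (Act * (Z -> R) * Z)) (f : tform Act) : Prop :=
  match f with
  | TTop => True
  | TDia a f' =>
      match c with
      | [] => False
      | (b, _, _) :: c' => b = a /\ comp_sat c' f'
      end
  end.

(* trace distribution formulae = finitely supported probability distributions
   on trace formulae (the support gives the pairwise distinct Phi_i with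
   weights r_i in (0,1] summing to 1) *)
Definition is_tdf (Act : Type) (Psi : tform Act -> R) : Prop := is_fdist Psi.

Definition prob_is (Z Act : Type) (X : list (Act * (Z -> R) * Z) -> Prop) (r : R) : Prop :=
  fsum (fun c => ifP (X c) (comp_prob c) 0) r.

Definition sat_tdf (S Act : Type) (trans : S -> Act -> (S -> R) -> Prop) (s : S)
           (Psi : tform Act -> R) : Prop :=
  exists (Z : Type) (transZ : Z -> Act -> (Z -> R) -> Prop) (corr : Z -> S) (zs : Z),
    resolution trans s transZ corr zs /\
    forall Phi, 0 < Psi Phi ->
      prob_is (fun c => is_max_comp transZ zs c /\ comp_sat c Phi /\
                        length c = depth Phi)
              (Psi Phi).

Definition Lset (S Act : Type) (trans : S -> Act -> (S -> R) -> Prop) (s : S)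
           (Psi : tform Act -> R) : Prop :=
  is_tdf Psi /\ sat_tdf trans s Psi.

Definition dtf (Act : Type) (f1 f2 : tform Act) : R := ifP (f1 = f2) 0 1.

Definition coupling (Act : Type) (Psi1 Psi2 : tform Act -> R)
           (w : tform Act * tform Act -> R) : Prop :=
  is_fdist w /\
  (forall f, fsum (fun f' => w (f, f')) (Psi1 f)) /\
  (forall f', fsum (fun f => w (f, f')) (Psi2 f')).

Definition coupling_cost (Act : Type) (w : tform Act * tform Act -> R) (r : R) : Prop :=
  fsum (fun p => w p * dtf (fst p) (snd p)) r.

(* D(Psi1,Psi2) = r : r is the minimum over couplings of the cost
   (Kantorovich lifting of d) *)
Definition D_is (Act : Type) (Psi1 Psi2 : tform Act -> R) (r : R) : Prop :=
  (exists w, coupling Psi1 Psi2 w /\ coupling_cost w r) /\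
  (forall w r', coupling Psi1 Psi2 w -> coupling_cost w r' -> r <= r').

Definition D_closed (Act : Type) (X : (tform Act -> R) -> Prop) : Prop :=
  forall Psi, is_tdf Psi -> ~ X Psi ->
    exists eps, 0 < eps /\
      forall Psi' d, is_tdf Psi' -> D_is Psi Psi' d -> d < eps -> ~ X Psi'.

From Stdlib Require Import Reals List Lra Lia FinFun FunctionalExtensionality.
From Stdlib Require Import Classical ClassicalEpsilon.
Import ListNotations.
Open Scope R_scope.

(* Image-finiteness alone makes the set of values Psi(Phi), for Psi ranging over
   L(s), finite for each trace formula Phi: a computation with the trace of Phi
   has a probability taken from a finite set determined by s and Phi, and since
   these probabilities are bounded below and sum to at most 1, only boundedly
   many of them contribute.  As |Psi(Phi) - Psi'(Phi)| <= D(Psi, Psi'), every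
   Psi' in L(s) close enough to a given Psi agrees with Psi on the finite
   support of Psi, hence equals Psi.  So the complement of L(s) is open. *)

Lemma ifP_pos (P : Prop) (a b : R) : P -> ifP P a b = a.
Proof. intros HP; unfold ifP; destruct excluded_middle_informative; tauto. Qed.

Lemma ifP_neg (P : Prop) (a b : R) : ~ P -> ifP P a b = b.
Proof. intros HP; unfold ifP; destruct excluded_middle_informative; tauto. Qed.

Lemma sum_list_app (l1 l2 : list R) : sum_list (l1 ++ l2) = sum_list l1 + sum_list l2.
Proof. induction l1; simpl; [lra | rewrite IHl1; lra]. Qed.

Lemma sum_list_map_add {T : Type} (f g : T -> R) (l : list T) :
  sum_list (map (fun x => f x + g x) l) = sum_list (map f l) + sum_list (map g l).
Proof. induction l; simpl; [lra | rewrite IHl; lra]. Qed.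

Lemma sum_list_map_le {T : Type} (f g : T -> R) (l : list T) :
  (forall x, In x l -> f x <= g x) -> sum_list (map f l) <= sum_list (map g l).
Proof.
  induction l as [|a l IH]; simpl; intros H; [lra|].
  assert (f a <= g a) by auto. assert (sum_list (map f l) <= sum_list (map g l)) by auto.
  lra.
Qed.

Lemma sum_list_map_nonneg {T : Type} (f : T -> R) (l : list T) :
  (forall x, In x l -> 0 <= f x) -> 0 <= sum_list (map f l).
Proof.
  induction l as [|a l IH]; simpl; intros H; [lra|].
  assert (0 <= f a) by auto. assert (0 <= sum_list (map f l)) by auto. lra.
Qed.

Lemma sum_list_map_In_le {T : Type} (f : T -> R) (l : list T) x :
  (forall y, In y l -> 0 <= f y) -> In x l -> f x <= sum_list (map f l).
Proof.
  induction l as [|a l IH]; simpl; intros H Hx; [contradiction|].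
  destruct Hx as [<-|Hx].
  - assert (0 <= sum_list (map f l)) by (apply sum_list_map_nonneg; auto). lra.
  - assert (0 <= f a) by auto. assert (f x <= sum_list (map f l)) by auto. lra.
Qed.

Lemma sum_list_map_NoDup_le {T : Type} (f : T -> R) (l l' : list T) :
  NoDup l -> (forall x, 0 <= f x) -> (forall x, In x l -> f x <> 0 -> In x l') ->
  sum_list (map f l) <= sum_list (map f l').
Proof.
  revert l'; induction l as [|x l IH]; intros l' Hnd Hnn Hcov; simpl.
  - apply sum_list_map_nonneg; auto.
  - inversion Hnd as [|? ? Hx Hnd']; subst.
    destruct (Req_dec (f x) 0) as [E|E].
    + assert (sum_list (map f l) <= sum_list (map f l')).
      { apply IH; auto. intros y Hy; apply Hcov; right; exact Hy. }
      lra.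
    + destruct (in_split x l' (Hcov x (or_introl eq_refl) E)) as [l1 [l2 ->]].
      assert (Hrest : sum_list (map f l) <= sum_list (map f (l1 ++ l2))).
      { apply IH; auto. intros y Hy Hy0.
        assert (Hin : In y (l1 ++ x :: l2)) by (apply Hcov; [right|]; assumption).
        apply in_app_or in Hin as [Hin|[<-|Hin]]; apply in_or_app; tauto. }
      rewrite map_app, sum_list_app in *; simpl. lra.
Qed.

Lemma fsum_value_le {T : Type} (f : T -> R) r x :
  (forall y, 0 <= f y) -> fsum f r -> f x <= r.
Proof.
  intros Hnn [l [_ [Hcov <-]]].
  destruct (Req_dec (f x) 0) as [E|E].
  - rewrite E. apply sum_list_map_nonneg; auto.
  - apply sum_list_map_In_le; auto.
Qed.

Lemma fsum_le_point_add {T P : Type} (u : T -> R) (G : P -> R) (emb : T -> P) x r d :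
  (forall y, 0 <= u y) -> (forall p, 0 <= G p) -> Injective emb ->
  (forall y, y <> x -> u y <= G (emb y)) ->
  fsum u r -> fsum G d -> r <= u x + d.
Proof.
  intros Hu HG Hinj Hdom [l [Hnd [_ <-]]] [lG [_ [HcovG <-]]].
  set (at_x := fun y => ifP (y = x) (u x) 0).
  set (off_x := fun y => ifP (y = x) 0 (u y)).
  assert (Hsplit : forall y, u y = at_x y + off_x y).
  { intros y; unfold at_x, off_x, ifP; destruct excluded_middle_informative; subst; lra. }
  assert (Hat_x : sum_list (map at_x l) <= u x).
  { replace (u x) with (sum_list (map at_x [x]))
      by (simpl; unfold at_x; rewrite ifP_pos by reflexivity; lra).
    apply sum_list_map_NoDup_le; auto.
    - intros y; unfold at_x, ifP; destruct excluded_middle_informative; auto; lra.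
    - intros y _ Hy; unfold at_x, ifP in Hy.
      destruct excluded_middle_informative; [left; auto | lra]. }
  assert (Hoff_x : sum_list (map off_x l) <= sum_list (map G lG)).
  { apply Rle_trans with (sum_list (map (fun y => G (emb y)) l)).
    - apply sum_list_map_le. intros y _; unfold off_x, ifP.
      destruct excluded_middle_informative; auto.
    - rewrite <- (map_map emb G). apply sum_list_map_NoDup_le; auto.
      apply Injective_map_NoDup; assumption. }
  rewrite (map_ext u (fun y => at_x y + off_x y)) by exact Hsplit.
  rewrite sum_list_map_add. lra.
Qed.

(* A coupling must keep the mass of [Phi] on the diagonal, up to its cost. *)
Lemma D_is_ge_pointwise_diff (Act : Type) (Psi Psi' : tform Act -> R) d Phi :
  D_is Psi Psi' d -> Rabs (Psi Phi - Psi' Phi) <= d.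
Proof.
  intros [[w [[[Hw0 _] [Hrow Hcol]] Hcost]] _].
  set (G := fun p : tform Act * tform Act => w p * dtf (fst p) (snd p)).
  assert (HG : forall p, 0 <= G p).
  { intros p; unfold G, dtf, ifP; destruct excluded_middle_informative;
      specialize (Hw0 p); nra. }
  assert (Hoff : forall f f', f <> f' -> w (f, f') <= G (f, f')).
  { intros f f' Hne; unfold G, dtf; simpl; rewrite ifP_neg by exact Hne; lra. }
  assert (Hrow_le : Psi Phi <= w (Phi, Phi) + d).
  { apply (fsum_le_point_add (fun f' => w (Phi, f')) G (pair Phi) Phi);
      [intros; apply Hw0 | exact HG | intros f1 f2 E; injection E; auto
      | intros f Hf; apply Hoff; congruence | apply Hrow | exact Hcost]. }
  assert (Hcol_le : Psi' Phi <= w (Phi, Phi) + d).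
  { apply (fsum_le_point_add (fun f => w (f, Phi)) G (fun f => (f, Phi)) Phi);
      [intros; apply Hw0 | exact HG | intros f1 f2 E; injection E; auto
      | intros f Hf; apply Hoff; congruence | apply Hcol | exact Hcost]. }
  assert (w (Phi, Phi) <= Psi Phi)
    by exact (fsum_value_le (fun f' => w (Phi, f')) _ Phi (fun _ => Hw0 _) (Hrow Phi)).
  assert (w (Phi, Phi) <= Psi' Phi)
    by exact (fsum_value_le (fun f => w (f, Phi)) _ Phi (fun _ => Hw0 _) (Hcol Phi)).
  apply Rabs_le; lra.
Qed.

Definition comp_trace {Z Act : Type} (c : list (Act * (Z -> R) * Z)) : list Act :=
  map (fun st => fst (fst st)) c.

Fixpoint tform_trace {Act : Type} (f : tform Act) : list Act :=
  match f with TTop => [] | TDia a f' => a :: tform_trace f' end.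

Lemma comp_sat_trace {Z Act : Type} (Phi : tform Act) (c : list (Act * (Z -> R) * Z)) :
  comp_sat c Phi -> length c = depth Phi -> comp_trace c = tform_trace Phi.
Proof.
  revert c; induction Phi as [|a Phi IH]; intros [|[[b pi] z] c]; simpl;
    intros Hsat Hlen; try easy.
  destruct Hsat as [-> Hsat]. unfold comp_trace in *; simpl. f_equal. apply IH; auto.
Qed.

Lemma comp_prob_pos {Z Act : Type} (transZ : Z -> Act -> (Z -> R) -> Prop) c z :
  is_comp transZ z c -> 0 < comp_prob c.
Proof.
  revert z; induction c as [|[[a pi] z'] c IH]; simpl; intros z H; [lra|].
  destruct H as [_ [Hpos Hc]]. apply Rmult_lt_0_compat; eauto.
Qed.

Lemma ex_list_forall_In {A B : Type} (P : A -> list B -> Prop) (l : list A) :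
  (forall x V V', P x V -> incl V V' -> P x V') ->
  (forall x, In x l -> exists V, P x V) -> exists V, forall x, In x l -> P x V.
Proof.
  intros Hmono; induction l as [|a l IH]; intros H.
  - exists []; intros _ [].
  - destruct (H a (or_introl eq_refl)) as [Va HVa].
    destruct IH as [Vl HVl]; [intros x Hx; apply H; right; exact Hx|].
    exists (Va ++ Vl). intros x [<-|Hx]; eapply Hmono; eauto.
    + apply incl_appl, incl_refl.
    + apply incl_appr, incl_refl.
Qed.

Lemma ex_pos_lower_bound (V : list R) :
  exists m, 0 < m /\ forall v, In v V -> 0 < v -> m <= v.
Proof.
  induction V as [|a V [m [Hm H]]].
  - exists 1; split; [lra | intros _ []].
  - destruct (Rlt_dec 0 a).
    + exists (Rmin m a); split; [apply Rmin_glb_lt; auto|].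
      intros v [<-|Hv] Hp; [apply Rmin_r | eapply Rle_trans; [apply Rmin_l | auto]].
    + exists m; split; auto. intros v [<-|Hv] Hp; [lra | auto].
Qed.

Lemma ex_separation (xs ys : list R) :
  exists e, 0 < e /\ forall x y, In x xs -> In y ys -> Rabs (x - y) < e -> x = y.
Proof.
  destruct (ex_pos_lower_bound (flat_map (fun x => map (fun y => Rabs (x - y)) ys) xs))
    as [m [Hm Hmin]].
  exists m; split; [exact Hm|]. intros x y Hx Hy Hxy.
  destruct (Req_dec x y) as [E|E]; [exact E|exfalso].
  assert (Hpos : 0 < Rabs (x - y)) by (apply Rabs_pos_lt; lra).
  assert (m <= Rabs (x - y)).
  { apply Hmin; [|exact Hpos]. apply in_flat_map; exists x; split; [exact Hx|].
    apply (in_map (fun y => Rabs (x - y))), Hy. }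
  lra.
Qed.

Lemma sum_list_bounded_length_finite (V : list R) (n : nat) :
  exists W, forall ys, incl ys V -> (length ys <= n)%nat -> In (sum_list ys) W.
Proof.
  induction n as [|n [W HW]].
  - exists [0]. intros [|y ys] _ Hlen; simpl in *; [left; reflexivity | lia].
  - exists (W ++ flat_map (fun v => map (Rplus v) W) V).
    intros [|y ys] Hincl Hlen; apply in_or_app.
    + left; apply HW; [exact Hincl | simpl; lia].
    + right; apply in_flat_map; exists y; split; [apply Hincl; left; reflexivity|].
      apply (in_map (Rplus y)), HW; [intros v Hv; apply Hincl; right; exact Hv | simpl in Hlen; lia].
Qed.

Lemma length_mul_le_sum_list (ys : list R) m :
  (forall y, In y ys -> m <= y) -> INR (length ys) * m <= sum_list ys.
Proof.
  induction ys as [|a ys IH]; cbn [length sum_list]; intros H; [simpl; lra|].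
  rewrite S_INR. assert (m <= a) by (apply H; left; reflexivity).
  assert (INR (length ys) * m <= sum_list ys) by (apply IH; intros; apply H; right; auto).
  lra.
Qed.

Lemma length_bounded_of_sum_list_le_1 (m : R) : 0 < m ->
  exists N, forall ys, (forall y, In y ys -> m <= y) -> sum_list ys <= 1 ->
    (length ys <= N)%nat.
Proof.
  intros Hm. destruct (archimed_cor1 m Hm) as [N [HN HN0]].
  exists N. intros ys Hys Hsum. apply Nat.nlt_ge. intros Hlt.
  assert (HNpos : 0 < INR N) by (apply lt_0_INR; exact HN0).
  assert (HNm : 1 < INR N * m).
  { apply (Rmult_lt_compat_l (INR N)) in HN; [|exact HNpos].
    rewrite Rinv_r in HN by lra. exact HN. }
  assert (INR N <= INR (length ys)) by (apply le_INR; lia).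
  assert (INR N * m <= INR (length ys) * m) by (apply Rmult_le_compat_r; lra).
  assert (INR (length ys) * m <= sum_list ys) by (apply length_mul_le_sum_list; exact Hys).
  lra.
Qed.

Lemma sum_list_map_ifP {T : Type} (X : T -> Prop) (g : T -> R) (l : list T) :
  sum_list (map (fun c => ifP (X c) (g c) 0) l) =
  sum_list (map g (filter (fun c => if excluded_middle_informative (X c) then true else false) l)).
Proof.
  induction l as [|a l IH]; simpl; [reflexivity|]. unfold ifP at 1.
  destruct excluded_middle_informative; simpl; rewrite IH; lra.
Qed.

Lemma fdist_eq_of_eq_on_support {T : Type} (Psi Psi' : T -> R) (l : list T) :
  NoDup l -> (forall x, Psi x <> 0 -> In x l) -> sum_list (map Psi l) = 1 ->
  is_fdist Psi' -> (forall x, In x l -> Psi' x = Psi x) -> Psi' = Psi.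
Proof.
  intros Hnd Hcov Hsum [Hnn' [l' [_ [Hcov' Hsum']]]] Heq.
  apply functional_extensionality; intros x.
  destruct (classic (In x l)) as [Hin|Hout]; [apply Heq, Hin|].
  assert (Hx0 : Psi x = 0) by (apply NNPP; intros Hx; apply Hout, Hcov, Hx).
  rewrite Hx0. destruct (Req_dec (Psi' x) 0) as [E|E]; [exact E|exfalso].
  assert (Hle : sum_list (map Psi' (x :: l)) <= sum_list (map Psi' l')).
  { apply sum_list_map_NoDup_le; auto. constructor; assumption. }
  simpl in Hle. rewrite Hsum', (map_ext_in Psi' Psi l Heq), Hsum in Hle.
  specialize (Hnn' x). lra.
Qed.

Definition matches_trans {S Act Z : Type} (trans : S -> Act -> (S -> R) -> Prop)
  (transZ : Z -> Act -> (Z -> R) -> Prop) (corr : Z -> S) : Prop :=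
  forall z a pi, transZ z a pi -> exists pi', trans (corr z) a pi' /\
     forall z', 0 < pi z' -> pi z' = pi' (corr z').

Section ImageFinite.

Variables (S Act : Type) (trans : S -> Act -> (S -> R) -> Prop).
Hypothesis Hwf : pts_wf trans.
Hypothesis Himg : image_finite trans.

Lemma comp_probs_finite_along_trace (tr : list Act) (t : S) :
  exists V : list R, forall (Z : Type) (transZ : Z -> Act -> (Z -> R) -> Prop)
    (corr : Z -> S) z c, matches_trans trans transZ corr -> corr z = t ->
    is_comp transZ z c -> comp_trace c = tr -> In (comp_prob c) V.
Proof.
  revert t; induction tr as [|a tr IH]; intros t.
  - exists [1]. intros Z transZ corr z [|st c] _ _ _ Htr; [left; reflexivity | discriminate].
  - destruct (Himg t a) as [L HL].
    destruct (ex_list_forall_In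
      (fun pi Sup => is_fdist pi -> forall x, pi x <> 0 -> In x Sup) L) as [Sup HSup].
    { intros pi V V' HV Hincl Hpi x Hx; apply Hincl, HV; assumption. }
    { intros pi _. destruct (classic (is_fdist pi)) as [[_ [lp [_ [Hcov _]]]]|Hn].
      - exists lp; intros _; exact Hcov.
      - exists []; intros Hpi; contradiction. }
    destruct (ex_list_forall_In (fun t' V => forall (Z : Type)
      (transZ : Z -> Act -> (Z -> R) -> Prop) (corr : Z -> S) z c,
      matches_trans trans transZ corr -> corr z = t' -> is_comp transZ z c ->
      comp_trace c = tr -> In (comp_prob c) V) Sup) as [Vt HVt].
    { intros t' V V' HV Hincl; intros; apply Hincl; eapply HV; eauto. }
    { intros t' _; apply IH. }
    exists (flat_map (fun pi => flat_map (fun t' => map (Rmult (pi t')) Vt) Sup) L).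
    intros Z transZ corr z c Hmatch Hz Hc Htr.
    destruct c as [|[[b piZ] z'] c]; [discriminate|].
    destruct Hc as [Hstep [Hpos Hc]].
    unfold comp_trace in Htr; simpl in Htr. injection Htr as -> Htr.
    destruct (Hmatch _ _ _ Hstep) as [pi [Htrans Hpi]]. rewrite Hz in Htrans.
    assert (HinL : In pi L) by (apply HL, Htrans).
    assert (HinSup : In (corr z') Sup).
    { apply (HSup pi HinL (Hwf _ _ _ Htrans)). rewrite <- (Hpi z' Hpos); lra. }
    simpl. rewrite (Hpi z' Hpos).
    apply in_flat_map; exists pi; split; [exact HinL|].
    apply in_flat_map; exists (corr z'); split; [exact HinSup|].
    apply in_map. eapply HVt; eauto.
Qed.

Lemma Lset_values_finite (s : S) (Phi : tform Act) :
  exists W : list R, forall Psi, Lset trans s Psi -> In (Psi Phi) W.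
Proof.
  destruct (comp_probs_finite_along_trace (tform_trace Phi) s) as [V HV].
  destruct (ex_pos_lower_bound V) as [m [Hm HmV]].
  destruct (length_bounded_of_sum_list_le_1 m Hm) as [N HN].
  destruct (sum_list_bounded_length_finite V N) as [W HW].
  exists (0 :: W). intros Psi [[Hnn Hsum1] [Z [transZ [corr [zs [Hres Hprob]]]]]].
  destruct (Req_dec (Psi Phi) 0) as [E|E]; [left; symmetry; exact E | right].
  destruct Hres as [_ [Hzs [_ [_ [Hmatch _]]]]].
  assert (Hpos : 0 < Psi Phi) by (specialize (Hnn Phi); lra).
  destruct (Hprob Phi Hpos) as [l [_ [_ Hsum]]].
  rewrite sum_list_map_ifP in Hsum.
  set (ys := map (@comp_prob Z Act) (filter _ l)) in Hsum.
  assert (Hys : forall y, In y ys -> In y V /\ 0 < y).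
  { intros y Hy. apply in_map_iff in Hy as [c [<- Hc]].
    apply filter_In in Hc as [_ Hb].
    destruct excluded_middle_informative as [[[Hcomp _] [Hsat Hlen]]|]; [|discriminate].
    split.
    - eapply HV; eauto. apply comp_sat_trace; assumption.
    - eapply comp_prob_pos; eauto. }
  rewrite <- Hsum. apply HW.
  - intros y Hy; apply Hys, Hy.
  - apply HN.
    + intros y Hy. destruct (Hys y Hy). apply HmV; assumption.
    + rewrite Hsum. exact (fsum_value_le Psi _ Phi Hnn Hsum1).
Qed.

End ImageFinite.

Theorem proposition15 (S Act : Type) (trans : S -> Act -> (S -> R) -> Prop)
  (Hwf : pts_wf trans)
  (Himg : image_finite trans)
  (Hfin : forall t : S, finite_process trans t)
  (s : S) :
  D_closed (Lset trans s).
Proof.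
  intros Psi [_ [lF [HndF [HcovF HsumF]]]] Hnot.
  destruct (ex_list_forall_In
    (fun Phi W => forall Psi', Lset trans s Psi' -> In (Psi' Phi) W) lF) as [W HW].
  { intros Phi W W' HW Hincl Psi' HL. apply Hincl, HW, HL. }
  { intros Phi _. apply Lset_values_finite; assumption. }
  destruct (ex_separation (map Psi lF) W) as [e [He Hsep]].
  exists e; split; [exact He|].
  intros Psi' d Htdf HD Hd HL. apply Hnot.
  replace Psi with Psi'; [exact HL|].
  apply (fdist_eq_of_eq_on_support Psi Psi' lF); try assumption.
  intros Phi Hin. symmetry. apply Hsep.
  - apply in_map, Hin.
  - apply (HW Phi Hin Psi' HL).
  - eapply Rle_lt_trans; [eapply D_is_ge_pointwise_diff; eassumption | exact Hd].
Qed.
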